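(* Let $0<m<L$ and $\delta\in[0,1)$. Suppose \[ \frac{1}{L} \leq \alpha \leq \frac{2}{(1+\delta)L + (1-\delta)m} \] and $\rho \geq \rho_\mathrm{GD}(\delta) := \max\big(1-(1-\delta)\alpha m,\ (1+\delta)\alpha L -1\big)$. Then there exists $c>0$ such that for every $f\in\mathcal{F}(m,L)$ with minimizer $x_\star$, every sequence $x(k)\in\mathbb{R}^n$ and every error sequence $e(k)\in\mathbb{R}^n$ satisfying, for all $k\ge0$, \[ x(k+1) = x(k) - \alpha\big(\nabla f(x(k)) + e(k)\big), \qquad |e(k)| \leq \delta\, |\nabla f(x(k))|, \] we have $|x(k)-x_\star| \leq c\, \rho^k\, |x(0)-x_\star|$ for all $k\ge 0$.
   Context: $\mathcal{F}(m,L)$ denotes the set of $C^1$ functions $f:\mathbb{R}^n\to\mathbb{R}$ that are $m$-strongly convex (i.e. $f(x)-\tfrac m2|x|^2$ is convex) and have $L$-Lipschitz gradient ($|\nabla f(x_1)-\nabla f(x_2)|\le L|x_1-x_2|$ for all $x_1,x_2$). For $m>0$ such $f$ has a unique global minimizer $x_\star$. The constant $c$ may depend on $m,L,\alpha,\delta,\rho$ but not on $f$, $x$ or $e$. *)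

From HB Require Import structures.
From mathcomp Require Import all_boot all_order all_algebra.
From mathcomp Require Import all_classical all_reals all_analysis.
Set Implicit Arguments. Unset Strict Implicit. Unset Printing Implicit Defensive.
Import Order.TTheory GRing.Theory Num.Theory.
Import numFieldNormedType.Exports.
Local Open Scope ring_scope.

(* Euclidean norm on R^n (the library's norm on matrices is the max norm). *)
Definition euc_norm (R : realType) (n : nat) (v : 'rV[R]_n) : R :=
  Num.sqrt (\sum_(i < n) (v ord0 i) ^+ 2).

Definition grad (R : realType) (n : nat) (f : 'rV[R]_n -> R) (x : 'rV[R]_n)
  : 'rV[R]_n := \row_(i < n) ('d f x (delta_mx ord0 i : 'rV[R]_n)).

Definition convex_fun (R : realType) (n : nat) (f : 'rV[R]_n -> R) : Prop :=
  forall (x y : 'rV[R]_n) (t : R), 0 <= t -> t <= 1 ->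
    f (t *: x + (1 - t) *: y) <= t * f x + (1 - t) * f y.

Definition strongly_convex (R : realType) (n : nat) (m : R)
  (f : 'rV[R]_n -> R) : Prop :=
  convex_fun (fun x => f x - m / 2 * euc_norm x ^+ 2).

Definition in_F (R : realType) (n : nat) (m L : R) (f : 'rV[R]_n -> R) : Prop :=
  [/\ (forall x, differentiable f x),
      continuous (grad f),
      strongly_convex m f &
      forall x1 x2 : 'rV[R]_n,
        euc_norm (grad f x1 - grad f x2) <= L * euc_norm (x1 - x2)].

(* A Lyapunov argument on function values.  Let
   rho0 = 1 - (1 - delta) alpha m and x1 = x0 - alpha (grad f x0 + e).  Add the
   interpolation inequalities of F(m,L) for the pairs (x0,x1), (xs,x1), (xs,x0)
   with weights rho0, 1 - rho0, rho0 (1 - rho0), and the error constraint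
   delta^2 |grad f x0|^2 - |e|^2 >= 0 with weight rho0 alpha / (2 delta).  What
   remains is, coordinate by coordinate, a nonnegative combination of squares,
   so f x1 - f xs <= rho0^2 (f x0 - f xs).  Finally
   m/2 |x - xs|^2 <= f x - f xs <= L/2 |x - xs|^2 turns the decay of values
   into |x_k - xs| <= sqrt (L/m) rho0^k |x_0 - xs|. *)

From mathcomp Require Import all_boot all_order all_algebra.
From mathcomp Require Import all_classical all_reals all_analysis.
From mathcomp Require Import ring lra.
Set Implicit Arguments.
Unset Strict Implicit.
Unset Printing Implicit Defensive.
Import Order.TTheory GRing.Theory Num.Theory.
Import numFieldNormedType.Exports.
Local Open Scope ring_scope.
Local Open Scope classical_set_scope.

Section RealFunctions.
Variable R : realType.
Implicit Types phi dphi : R -> R.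

Lemma increment_le_of_derive_le phi dphi (b c : R) :
  (forall t : R, is_derive t 1 phi (dphi t)) ->
  (forall t : R, 0 < t < 1 -> dphi t <= b + 2 * c * t) ->
  phi 1 - phi 0 <= b + c.
Proof.
move=> dphiE dphi_le.
pose p : {poly R} := b *: 'X + c *: 'X^2.
have p'E t : p^`().[t] = b + 2 * c * t.
  by rewrite /p derivD !derivZ derivX derivXn !hornerE /=; ring.
have dpsi (t : R) : is_derive t 1 (phi - horner p) (dphi t - p^`().[t]).
  exact: is_deriveB.
suff : phi 1 - p.[1] <= phi 0 - p.[0] by rewrite /p !hornerE /=; lra.
change ((phi - horner p) 1 <= (phi - horner p) 0).
apply: (@ler0_derive1_le_cc _ _ 0 1) => //; rewrite ?in_itv /= ?lexx ?ler01 //.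
- move=> t /[!in_itv] /= t01.
  by rewrite derive1E (@derive_val _ _ _ _ _ _ _ (dpsi t)) p'E subr_le0 dphi_le.
- by apply: derivable_within_continuous => t _.
Qed.

Lemma is_derive0_le_of_quadratic_ub phi (D K C : R) :
  is_derive 0 (1 : R) phi D ->
  (forall t : R, 0 < t <= 1 -> phi t - phi 0 <= t * K + t ^+ 2 * C) ->
  D <= K.
Proof.
move=> dphi phi_le.
have quot_cvg : (fun h => h^-1 *: (phi (h *: 1 + 0) - phi 0)) @ 0^'+ --> D.
  by apply: cvg_dnbhs_at_right; rewrite -(@derive_val _ _ _ _ _ _ _ dphi); exact: ex_derive.
have ub_cvg : (fun t => K + t * C) @ 0^'+ --> K.
  apply: cvg_at_right_filter; rewrite -[X in _ --> X]addr0.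
  apply: cvgD; first exact: cvg_cst.
  by rewrite -[X in _ --> X](mul0r C); apply: cvgMr_tmp; exact: cvg_id.
apply: (ler_cvg_to quot_cvg ub_cvg); near=> t.
have t_gt0 : 0 < t by near: t; exact: nbhs_right_gt.
have t_le1 : t <= 1 by near: t; apply: nbhs_right_le; exact: ltr01.
rewrite /= [t *: 1]mulr1 addr0 ler_pdivrMl // mulrDr mulrA -expr2.
by apply: phi_le; rewrite t_gt0.
Unshelve. all: by end_near.
Qed.

End RealFunctions.

Section DotProduct.
Variables (R : realType) (n : nat).
Implicit Types u v w : 'rV[R]_n.

Definition dotr u v : R := \sum_(i < n) u ord0 i * v ord0 i.

Lemma dotrr_ge0 u : 0 <= dotr u u.
Proof. by apply: sumr_ge0 => i _; rewrite -expr2 sqr_ge0. Qed.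

Lemma euc_norm_ge0 u : 0 <= euc_norm u.
Proof. exact: sqrtr_ge0. Qed.

Lemma euc_normE u : euc_norm u = Num.sqrt (dotr u u).
Proof. by rewrite /euc_norm /dotr; under eq_bigr do rewrite expr2. Qed.

Lemma euc_norm_sqr u : euc_norm u ^+ 2 = dotr u u.
Proof. by rewrite euc_normE sqr_sqrtr ?dotrr_ge0. Qed.

Lemma dotrBl u v w : dotr (u - v) w = dotr u w - dotr v w.
Proof.
by rewrite /dotr -sumrB; apply: eq_bigr => i _; rewrite !mxE mulrBl.
Qed.

Lemma dotrZl (a : R) u v : dotr (a *: u) v = a * dotr u v.
Proof. by rewrite /dotr mulr_sumr; apply: eq_bigr => i _; rewrite mxE mulrA. Qed.

Lemma dotrZr (a : R) u v : dotr u (a *: v) = a * dotr u v.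
Proof.
by rewrite /dotr mulr_sumr; apply: eq_bigr => i _; rewrite mxE mulrCA.
Qed.

Lemma dotr0l v : dotr 0 v = 0.
Proof. by rewrite /dotr big1 // => i _; rewrite mxE mul0r. Qed.

Lemma euc_normZ (a : R) u : euc_norm (a *: u) = `|a| * euc_norm u.
Proof.
rewrite !euc_normE dotrZl dotrZr mulrA -expr2.
by rewrite sqrtrM ?sqr_ge0 // sqrtr_sqr.
Qed.

Lemma dotrr_eq0 u : (dotr u u == 0) = (u == 0).
Proof.
apply/idP/eqP => [/eqP u0|->]; last by rewrite dotr0l.
apply/rowP => i; rewrite mxE; apply/eqP; rewrite -[_ == 0]orbb -mulf_eq0.
by rewrite (psumr_eq0P _ u0) // => j _; rewrite -expr2 sqr_ge0.
Qed.

Lemma dotr_young (l : R) u v : 0 < l -> 2 * dotr u v <= l * dotr u u + l^-1 * dotr v v.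
Proof.
move=> l_gt0; rewrite /dotr !mulr_sumr -big_split /= -subr_ge0 -sumrB.
apply: sumr_ge0 => i _.
have -> : l * (u ord0 i * u ord0 i) + l^-1 * (v ord0 i * v ord0 i) -
    2 * (u ord0 i * v ord0 i) = (l * u ord0 i - v ord0 i) ^+ 2 / l.
  by field; rewrite gt_eqF.
by rewrite divr_ge0 ?sqr_ge0 ?ltW.
Qed.

Lemma dotr_le_of_norm_le (c : R) u v :
  0 < c -> euc_norm u <= c * euc_norm v -> dotr u v <= c * dotr v v.
Proof.
move=> c_gt0 uv_le.
have uu_le : dotr u u <= c ^+ 2 * dotr v v.
  rewrite -!euc_norm_sqr -exprMn !expr2.
  by apply: ler_pM; rewrite ?euc_norm_ge0.
have := @dotr_young c^-1 u v; rewrite invrK invr_gt0 => /(_ c_gt0).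
have : c^-1 * dotr u u <= c * dotr v v.
  by rewrite mulrC ler_pdivrMr // mulrAC -expr2.
lra.
Qed.

Lemma dotr_convex_comb (t : R) u v :
  dotr (t *: u + (1 - t) *: v) (t *: u + (1 - t) *: v)
  = t * dotr u u + (1 - t) * dotr v v - t * (1 - t) * dotr (u - v) (u - v).
Proof.
rewrite /dotr !mulr_sumr -big_split -sumrB /=.
by apply: eq_bigr => i _; rewrite !mxE; ring.
Qed.

End DotProduct.

Section Gradient.
Variables (R : realType) (n : nat) (f : 'rV[R]_n -> R).

Lemma diff_grad x v : 'd f x v = dotr (grad f x) v.
Proof.
rewrite {1}(row_sum_delta v) linear_sum /dotr; apply: eq_bigr => i _.
by rewrite linearZ /= /grad mxE mulrC.
Qed.

Lemma is_derive_line (y d : 'rV[R]_n) (t : R) :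
  differentiable f (y + t *: d) ->
  is_derive t 1 (fun s => f (y + s *: d)) (dotr (grad f (y + t *: d)) d).
Proof.
move=> df; set a := y + t *: d.
have quotE : (fun h : R => h^-1 *: ((fun s => f (y + s *: d)) (h *: 1 + t)
                                     - f (y + t *: d))) =
             (fun h : R => h^-1 *: (f (h *: d + a) - f a)).
  by apply/funext => h; rewrite [h *: 1]mulr1 scalerDl addrCA addrA.
apply: DeriveDef; rewrite /derivable /derive /= quotE.
- exact: diff_derivable.
- by rewrite -/(derive f a d) deriveE // diff_grad.
Qed.

Lemma strongly_convex_lb (m : R) (y d : 'rV[R]_n) :
  differentiable f y -> strongly_convex m f ->
  f y + dotr (grad f y) d + m / 2 * dotr d d <= f (y + d).
Proof.
move=> df f_sc.
have dphi := @is_derive_line y d 0; rewrite scale0r addr0 in dphi.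
suff : dotr (grad f y) d <= f (y + d) - f y - m / 2 * dotr d d by lra.
apply: (@is_derive0_le_of_quadratic_ub _ _ _ _ (m / 2 * dotr d d) (dphi df)).
move=> t /andP[t_gt0 t_le1]; rewrite scale0r addr0.
have combE : t *: (y + d) + (1 - t) *: y = y + t *: d.
  by apply/rowP => i; rewrite !mxE; ring.
have := f_sc (y + d) y t (ltW t_gt0) t_le1.
rewrite /= !euc_norm_sqr dotr_convex_comb combE [y + d - y]addrC addKr.
lra.
Qed.

Lemma lipschitz_grad_ub (L : R) (y d : 'rV[R]_n) : 0 < L ->
  (forall x, differentiable f x) ->
  (forall x1 x2, euc_norm (grad f x1 - grad f x2) <= L * euc_norm (x1 - x2)) ->
  f (y + d) <= f y + dotr (grad f y) d + L / 2 * dotr d d.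
Proof.
move=> L_gt0 df f_lip.
suff : f (y + 1 *: d) - f (y + 0 *: d) <= dotr (grad f y) d + L / 2 * dotr d d.
  by rewrite scale1r scale0r addr0; lra.
apply: (increment_le_of_derive_le (fun t => @is_derive_line y d t (df _))).
move=> t /andP[t_gt0 _].
have -> : 2 * (L / 2 * dotr d d) * t = L * t * dotr d d by field.
rewrite -lerBlDl -dotrBl; apply: dotr_le_of_norm_le; first exact: mulr_gt0.
apply: le_trans (f_lip (y + t *: d) y) _.
by rewrite addrAC subrr add0r euc_normZ ger0_norm ?mulrA ?(ltW t_gt0).
Qed.

End Gradient.

Definition interp_bound (R : realType) (m L x y gx gy : R) : R :=
  gy * (x - y) + m / 2 * (x - y) ^+ 2 + (gx - gy - m * (x - y)) ^+ 2 / (2 * (L - m)).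

Definition interp_boundv (R : realType) (n : nat) (m L : R) (x y gx gy : 'rV[R]_n) : R :=
  dotr gy (x - y) + m / 2 * dotr (x - y) (x - y)
  + dotr (gx - gy - m *: (x - y)) (gx - gy - m *: (x - y)) / (2 * (L - m)).

Section Interpolation.
Variables (R : realType) (n : nat) (m L : R).
Implicit Types x y gx gy : 'rV[R]_n.

Lemma interp_boundvE x y gx gy :
  interp_boundv m L x y gx gy =
  \sum_(i < n) interp_bound m L (x ord0 i) (y ord0 i) (gx ord0 i) (gy ord0 i).
Proof.
rewrite /interp_boundv /dotr mulr_sumr mulr_suml -!big_split /=.
by apply: eq_bigr => i _; rewrite !mxE /interp_bound; ring.
Qed.

(* [z] maximizes the gap between the lower quadratic model of [f] at [y] and the
   upper one at [x]. *)
Lemma model_gap_interp_boundv x y gx gy : m < L ->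
  let z := x - (L - m)^-1 *: (gx - gy - m *: (x - y)) in
  dotr gy (z - y) + m / 2 * dotr (z - y) (z - y)
  - (dotr gx (z - x) + L / 2 * dotr (z - x) (z - x))
  = interp_boundv m L x y gx gy.
Proof.
move=> m_lt_L z; rewrite interp_boundvE /dotr !mulr_sumr -!big_split -sumrB /=.
apply: eq_bigr => i _; rewrite !mxE /interp_bound.
by field; rewrite subr_eq0 gt_eqF.
Qed.

End Interpolation.

Section SmoothStronglyConvex.
Variables (R : realType) (n : nat) (m L : R) (f : 'rV[R]_n -> R).
Hypotheses (L_gt0 : 0 < L) (f_in_F : in_F m L f).

Lemma in_F_interpolation (x y : 'rV[R]_n) : m < L ->
  f y + interp_boundv m L x y (grad f x) (grad f y) <= f x.
Proof.
move=> m_lt_L; case: f_in_F => df _ f_sc f_lip.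
have := model_gap_interp_boundv x y (grad f x) (grad f y) m_lt_L.
set z := x - (L - m)^-1 *: _ => <-.
have ub := lipschitz_grad_ub x (z - x) L_gt0 df f_lip.
have lb := strongly_convex_lb (z - y) (df y) f_sc.
rewrite subrKC in ub; rewrite subrKC in lb.
rewrite addrA lerBlDr !addrA; exact: le_trans lb ub.
Qed.

Lemma grad_eq0_at_min (xs : 'rV[R]_n) : (forall y, f xs <= f y) -> grad f xs = 0.
Proof.
move=> xs_min; case: f_in_F => df _ _ f_lip; apply/eqP; rewrite -dotrr_eq0.
set g := grad f xs.
have ub := lipschitz_grad_ub xs (- L^-1 *: g) L_gt0 df f_lip.
rewrite dotrZr dotrZl dotrZr -/g in ub.
have := le_trans (xs_min _) ub; rewrite -addrA lerDl.
have -> : - L^-1 * dotr g g + L / 2 * (- L^-1 * (- L^-1 * dotr g g))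
          = - (dotr g g / (2 * L)) by field; rewrite gt_eqF.
rewrite oppr_ge0 pmulr_lle0 ?invr_gt0 ?mulr_gt0 // => gg_le0.
by rewrite eq_le gg_le0 dotrr_ge0.
Qed.

Lemma in_F_value_gap_bounds (xs x : 'rV[R]_n) : (forall y, f xs <= f y) ->
  m / 2 * dotr (x - xs) (x - xs) <= f x - f xs <= L / 2 * dotr (x - xs) (x - xs).
Proof.
move=> xs_min; have gs0 := grad_eq0_at_min xs_min.
case: f_in_F => df _ f_sc f_lip.
have lb := strongly_convex_lb (x - xs) (df xs) f_sc.
have ub := lipschitz_grad_ub xs (x - xs) L_gt0 df f_lip.
rewrite subrKC gs0 dotr0l addr0 in lb ub.
by rewrite lerBrDl lerBlDl lb ub.
Qed.

End SmoothStronglyConvex.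

Lemma value_gap_contraction (R : realType) (rho f0 f1 fs q1 q2 q3 : R) :
  0 <= rho <= 1 -> f1 + q1 <= f0 -> f1 + q2 <= fs -> f0 + q3 <= fs ->
  0 <= rho * q1 + (1 - rho) * q2 + rho * (1 - rho) * q3 ->
  f1 - fs <= rho ^+ 2 * (f0 - fs).
Proof.
move=> /andP[rho_ge0 rho_le1] le01 le1s le0s q_ge0.
have w1 : 0 <= rho * (f0 - (f1 + q1)) by rewrite mulr_ge0 ?subr_ge0.
have w2 : 0 <= (1 - rho) * (fs - (f1 + q2)) by rewrite mulr_ge0 ?subr_ge0.
have w3 : 0 <= rho * (1 - rho) * (fs - (f0 + q3)) by rewrite !mulr_ge0 ?subr_ge0.
lra.
Qed.

(* The first branch of the max defining rho_GD(delta); the step-size bound makes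
   it the larger one. *)
Definition rho_gd (R : realType) (m alpha delta : R) : R := 1 - (1 - delta) * alpha * m.

Section InexactGradientDescent.
Variables (R : realType) (m L alpha delta : R).
Hypotheses (m_gt0 : 0 < m) (m_lt_L : m < L) (delta_ge0 : 0 <= delta)
  (delta_lt1 : delta < 1) (alpha_gt0 : 0 < alpha)
  (step_le : alpha * ((1 + delta) * L + (1 - delta) * m) <= 2).
Local Notation rho := (rho_gd m alpha delta).

Lemma error_lt_rho_gd : delta * L * alpha < rho.
Proof.
have : 0 < alpha * (1 - delta) * (L - m) by rewrite !mulr_gt0 ?subr_gt0.
have := step_le; rewrite /rho_gd; lra.
Qed.

Lemma rho_gd_ge0 : 0 <= rho.
Proof.
apply: le_trans (ltW error_lt_rho_gd).
by rewrite !mulr_ge0 // ltW // (lt_trans m_gt0).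
Qed.

Lemma rho_gd_le1 : rho <= 1.
Proof.
by rewrite /rho_gd lerBlDr lerDl !mulr_ge0 // ?subr_ge0 ltW.
Qed.

Lemma gd_coord_certificate (z zs g h e : R) : 0 < delta ->
  rho * alpha / (2 * delta) * (delta ^+ 2 * g ^+ 2 - e ^+ 2) <=
  rho * interp_bound m L z (z - alpha * (g + e)) g h
  + (1 - rho) * interp_bound m L zs (z - alpha * (g + e)) 0 h
  + rho * (1 - rho) * interp_bound m L zs z 0 g.
Proof.
move=> delta_gt0.
have L_gt0 : 0 < L by apply: lt_trans m_lt_L.
have s_gt0 : 0 < rho - delta * L * alpha by rewrite subr_gt0 error_lt_rho_gd.
set s := rho - delta * L * alpha in s_gt0 *.
set k := L - m.
have k_gt0 : 0 < k by rewrite subr_gt0.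
set ce := alpha * s / (2 * delta).
set be := delta * (rho - L * alpha) / s.
set ga := L * (1 - rho) * delta / s.
set cp := rho * (1 - delta) * alpha * L * (2 - alpha * ((1 + delta) * L + (1 - delta) * m))
          / (2 * k * s).
have ce_ge0 : 0 <= ce.
  by rewrite /ce divr_ge0 ?mulr_ge0 ?(ltW alpha_gt0) ?(ltW s_gt0) ?(ltW delta_gt0).
have cp_ge0 : 0 <= cp.
  apply: divr_ge0; last by rewrite !mulr_ge0 ?(ltW k_gt0) ?(ltW s_gt0).
  by rewrite !mulr_ge0 ?rho_gd_ge0 ?subr_ge0 ?(ltW alpha_gt0) ?(ltW L_gt0) ?(ltW delta_lt1).
rewrite -subr_ge0.
have -> : rho * interp_bound m L z (z - alpha * (g + e)) g h
  + (1 - rho) * interp_bound m L zs (z - alpha * (g + e)) 0 h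
  + rho * (1 - rho) * interp_bound m L zs z 0 g
  - rho * alpha / (2 * delta) * (delta ^+ 2 * g ^+ 2 - e ^+ 2)
  = (h - L * (1 - rho) * (z - zs) + L * alpha * (g + e) - rho * g) ^+ 2 / (2 * k)
    + ce * (e + be * g + ga * (z - zs)) ^+ 2 + cp * (g - m * (z - zs)) ^+ 2.
  rewrite /interp_bound /ce /be /ga /cp /k /s /rho_gd.
  by field; rewrite !gt_eqF.
apply: addr_ge0; first apply: addr_ge0.
- by rewrite divr_ge0 ?sqr_ge0 // mulr_ge0 // ltW.
- by rewrite mulr_ge0 // sqr_ge0.
- by rewrite mulr_ge0 // sqr_ge0.
Qed.

(* The multiplier of the error constraint above blows up as delta -> 0, so the
   exact case needs its own certificate. *)
Lemma gd_coord_certificate_exact (z zs g h : R) : delta = 0 ->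
  0 <= rho * interp_bound m L z (z - alpha * g) g h
       + (1 - rho) * interp_bound m L zs (z - alpha * g) 0 h
       + rho * (1 - rho) * interp_bound m L zs z 0 g.
Proof.
move=> delta0.
have step0 : alpha * (L + m) <= 2 by move: step_le; rewrite delta0 subr0 addr0 !mul1r.
have k_gt0 : 0 < L - m by rewrite subr_gt0.
set cp := alpha * L * (2 - alpha * (L + m)) / (2 * (L - m)).
have cp_ge0 : 0 <= cp.
  have L_ge0 : 0 <= L by exact: ltW (lt_trans m_gt0 m_lt_L).
  by rewrite /cp divr_ge0 ?mulr_ge0 ?subr_ge0 ?(ltW alpha_gt0) ?(ltW m_lt_L).
have -> : rho * interp_bound m L z (z - alpha * g) g h
    + (1 - rho) * interp_bound m L zs (z - alpha * g) 0 h
    + rho * (1 - rho) * interp_bound m L zs z 0 g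
  = (h - L * (1 - rho) * (z - zs) + L * alpha * g - rho * g) ^+ 2 / (2 * (L - m))
    + cp * (g - m * (z - zs)) ^+ 2.
  by rewrite /interp_bound /cp /rho_gd delta0; field; rewrite gt_eqF.
apply: addr_ge0; last by rewrite mulr_ge0 // sqr_ge0.
by rewrite divr_ge0 ?sqr_ge0 // mulr_ge0 // ltW.
Qed.

Lemma gd_certificate (n : nat) (x0 xs g h e : 'rV[R]_n) :
  euc_norm e <= delta * euc_norm g ->
  0 <= rho * interp_boundv m L x0 (x0 - alpha *: (g + e)) g h
       + (1 - rho) * interp_boundv m L xs (x0 - alpha *: (g + e)) 0 h
       + rho * (1 - rho) * interp_boundv m L xs x0 0 g.
Proof.
move=> e_le; rewrite !interp_boundvE !mulr_sumr -!big_split /=.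
have [delta0 | delta_neq0] := eqVneq delta 0.
  have e0 : e = 0.
    move: e_le; rewrite delta0 mul0r => e_le0.
    apply/eqP; rewrite -dotrr_eq0 -euc_norm_sqr expr2 mulf_eq0 orbb eq_le e_le0.
    exact: euc_norm_ge0.
  apply: sumr_ge0 => i _; rewrite e0 addr0 !mxE.
  exact: gd_coord_certificate_exact.
have delta_gt0 : 0 < delta by rewrite lt_def delta_neq0.
have ee_le : dotr e e <= delta ^+ 2 * dotr g g.
  rewrite -!euc_norm_sqr -exprMn !expr2.
  by apply: ler_pM; rewrite ?euc_norm_ge0.
apply: le_trans (_ : 0 <= rho * alpha / (2 * delta) * (delta ^+ 2 * dotr g g - dotr e e)) _.
  rewrite mulr_ge0 ?subr_ge0 // divr_ge0 ?mulr_ge0 ?rho_gd_ge0 ?(ltW alpha_gt0) //.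
rewrite /dotr mulr_sumr -sumrB mulr_sumr; apply: ler_sum => i _.
rewrite !mxE -!expr2.
exact: gd_coord_certificate.
Qed.

Lemma inexact_gd_step (n : nat) (f : 'rV[R]_n -> R) (xs x0 e : 'rV[R]_n) :
  in_F m L f -> (forall y, f xs <= f y) ->
  euc_norm e <= delta * euc_norm (grad f x0) ->
  f (x0 - alpha *: (grad f x0 + e)) - f xs <= rho ^+ 2 * (f x0 - f xs).
Proof.
move=> f_in_F xs_min e_le.
have L_gt0 : 0 < L by apply: lt_trans m_lt_L.
have gs0 := grad_eq0_at_min L_gt0 f_in_F xs_min.
set x1 := x0 - alpha *: (grad f x0 + e).
have I1 := in_F_interpolation L_gt0 f_in_F x0 x1 m_lt_L.
have I2 := in_F_interpolation L_gt0 f_in_F xs x1 m_lt_L.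
have I3 := in_F_interpolation L_gt0 f_in_F xs x0 m_lt_L.
rewrite gs0 in I2 I3.
apply: (value_gap_contraction _ I1 I2 I3); first by rewrite rho_gd_ge0 rho_gd_le1.
exact: gd_certificate.
Qed.

Lemma inexact_gd_value_decay (n : nat) (f : 'rV[R]_n -> R) (xs : 'rV[R]_n)
    (x e : nat -> 'rV[R]_n) :
  in_F m L f -> (forall y, f xs <= f y) ->
  (forall k, x k.+1 = x k - alpha *: (grad f (x k) + e k) /\
             euc_norm (e k) <= delta * euc_norm (grad f (x k))) ->
  forall k, f (x k) - f xs <= (rho ^+ 2) ^+ k * (f (x 0%N) - f xs).
Proof.
move=> f_in_F xs_min x_gd; elim=> [|k IHk]; first by rewrite expr0 mul1r.
have [-> e_le] := x_gd k.
apply: le_trans (inexact_gd_step f_in_F xs_min e_le) _.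
by rewrite [(_ ^+ 2) ^+ k.+1]exprS -mulrA ler_wpM2l ?sqr_ge0.
Qed.

Lemma inexact_gd_dist_decay (n : nat) (f : 'rV[R]_n -> R) (xs : 'rV[R]_n)
    (x e : nat -> 'rV[R]_n) :
  in_F m L f -> (forall y, f xs <= f y) ->
  (forall k, x k.+1 = x k - alpha *: (grad f (x k) + e k) /\
             euc_norm (e k) <= delta * euc_norm (grad f (x k))) ->
  forall k, dotr (x k - xs) (x k - xs)
            <= L / m * (rho ^+ 2) ^+ k * dotr (x 0%N - xs) (x 0%N - xs).
Proof.
move=> f_in_F xs_min x_gd k.
have L_gt0 : 0 < L by apply: lt_trans m_lt_L.
have /andP[lb _] := in_F_value_gap_bounds L_gt0 f_in_F (x k) xs_min.
have /andP[_ ub] := in_F_value_gap_bounds L_gt0 f_in_F (x 0%N) xs_min.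
rewrite -(@ler_pM2l _ (m / 2)) ?divr_gt0 //.
apply: le_trans lb (le_trans (inexact_gd_value_decay f_in_F xs_min x_gd k) _).
have -> : m / 2 * (L / m * (rho ^+ 2) ^+ k * dotr (x 0%N - xs) (x 0%N - xs))
          = (rho ^+ 2) ^+ k * (L / 2 * dotr (x 0%N - xs) (x 0%N - xs)).
  by field; rewrite gt_eqF.
by apply: ler_wpM2l; first exact/exprn_ge0/sqr_ge0.
Qed.

Lemma inexact_gd_rate (n : nat) (f : 'rV[R]_n -> R) (xs : 'rV[R]_n)
    (x e : nat -> 'rV[R]_n) :
  in_F m L f -> (forall y, f xs <= f y) ->
  (forall k, x k.+1 = x k - alpha *: (grad f (x k) + e k) /\
             euc_norm (e k) <= delta * euc_norm (grad f (x k))) ->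
  forall k, euc_norm (x k - xs) <= Num.sqrt (L / m) * rho ^+ k * euc_norm (x 0%N - xs).
Proof.
move=> f_in_F xs_min x_gd k; have L_gt0 : 0 < L by apply: lt_trans m_lt_L.
rewrite -ler_sqr ?nnegrE ?mulr_ge0 ?sqrtr_ge0 ?exprn_ge0 ?euc_norm_ge0 ?rho_gd_ge0 //.
rewrite !exprMn [Num.sqrt (L / m) ^+ 2]sqr_sqrtr ?divr_ge0 ?(ltW m_gt0) ?(ltW L_gt0) //.
rewrite !euc_norm_sqr -exprM mulnC exprM.
exact: (inexact_gd_dist_decay f_in_F xs_min x_gd k).
Qed.

End InexactGradientDescent.

Theorem proposition1p3 (R : realType) (m L alpha delta rho : R) :
  0 < m -> m < L -> 0 <= delta -> delta < 1 ->
  1 / L <= alpha ->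
  alpha <= 2 / ((1 + delta) * L + (1 - delta) * m) ->
  Num.max (1 - (1 - delta) * alpha * m) ((1 + delta) * alpha * L - 1) <= rho ->
  exists c : R, 0 < c /\
    forall (n : nat) (f : 'rV[R]_n -> R) (xs : 'rV[R]_n)
           (x e : nat -> 'rV[R]_n),
      in_F m L f ->
      (forall y, f xs <= f y) ->
      (forall k : nat,
          x k.+1 = x k - alpha *: (grad f (x k) + e k) /\
          euc_norm (e k) <= delta * euc_norm (grad f (x k))) ->
      forall k : nat, euc_norm (x k - xs) <= c * rho ^+ k * euc_norm (x 0%N - xs).
Proof.
move=> m_gt0 m_lt_L delta_ge0 delta_lt1 alpha_ge alpha_le rho_ge.
have L_gt0 : 0 < L := lt_trans m_gt0 m_lt_L.
(* The hypothesis 1 / L <= alpha is only used to get alpha > 0. *)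
have alpha_gt0 : 0 < alpha by apply: lt_le_trans alpha_ge; rewrite div1r invr_gt0.
have step_le : alpha * ((1 + delta) * L + (1 - delta) * m) <= 2.
  rewrite -ler_pdivlMr // addr_gt0 // mulr_gt0 //; lra.
set rho0 := rho_gd m alpha delta.
have rho0_le : rho0 <= rho by move: rho_ge; rewrite ge_max => /andP[].
have rho0_ge0 : 0 <= rho0 := rho_gd_ge0 m_gt0 m_lt_L delta_ge0 delta_lt1 alpha_gt0 step_le.
exists (Num.sqrt (L / m)); split; first by rewrite sqrtr_gt0 divr_gt0.
move=> n f xs x e f_in_F xs_min x_gd k.
apply: le_trans (inexact_gd_rate m_gt0 m_lt_L delta_ge0 delta_lt1 alpha_gt0 step_le
  f_in_F xs_min x_gd k) _.
apply: ler_wpM2r; first exact: euc_norm_ge0.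
apply: ler_wpM2l; first exact: sqrtr_ge0.
by apply: lerXn2r; rewrite ?nnegrE // (le_trans rho0_ge0).
Qed.
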